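(* Let $q$ be a prime power and $\mathcal{C}\subseteq(\mathbb{C}^q)^{\otimes n}$ a stabilizer code with stabilizer group $S\subseteq\mathcal{P}_q^n$. Assume that for every $i\in[n]$ there exist stabilizers $P=X^\alpha Z^\beta\in S$ and $Q=X^\gamma Z^\delta\in S$ ($\alpha,\beta,\gamma,\delta\in\mathbb{F}_q^n$) with $|\mathrm{supp}(P)\cup\mathrm{supp}(Q)|\leq r$, $(\alpha_i,\beta_i)=(1,0)$ and $(\gamma_i,\delta_i)=(0,1)$. Then $\mathcal{C}$ is a quantum locally recoverable code with locality $r$.
   Context: Let $\mathbb{F}_q$ have characteristic $p$. For $a\in\mathbb{F}_q$, single-qudit Paulis on $\mathbb{C}^{\mathbb{F}_q}$: $X^a|x\rangle=|x+a\rangle$, $Z^a|x\rangle=e^{(2\pi i/p)\mathrm{tr}_{\mathbb{F}_q/\mathbb{F}_p}(ax)}|x\rangle$. For $\alpha,\beta\in\mathbb{F}_q^n$, $X^\alpha Z^\beta=\bigotimes_{j}X^{\alpha_j}Z^{\beta_j}$; $\mathcal{P}_q^n$ is the group of such operators modulo global phase (identified with $\mathbb{F}_q^{2n}$), and $\mathrm{supp}(X^\alpha Z^\beta)=\{j:(\alpha_j,\beta_j)\neq(0,0)\}$. A stabilizer code is the simultaneous $+1$-eigenspace of an abelian (all elements commuting, including phases) subgroup $S$ of $\mathcal{P}_q^n$ that is an $\mathbb{F}_q$-subspace; $S$ is its stabilizer group. A quantum code on qudits $[n]$ is locally recoverable with locality $r$ if for each $i\in[n]$ there is $I_i\subseteq[n]$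 with $i\in I_i$, $|I_i|\le r$, and a quantum channel $\mathrm{Rec}_i$ from qudits $I_i\setminus\{i\}$ to qudits $I_i$ with $(\mathrm{Rec}_i\otimes\mathrm{id}_{[n]\setminus I_i})(\psi_{[n]\setminus\{i\}})=\psi$ for every code state $\psi$, where $\psi_B$ denotes the reduced density matrix on $B$. *)

From HB Require Import structures.
From mathcomp Require Import all_boot all_order all_algebra all_field.
Set Implicit Arguments. Unset Strict Implicit. Unset Printing Implicit Defensive.
Import Order.TTheory GRing.Theory Num.Theory.
Local Open Scope ring_scope.

(* Qudits over a finite field F (q = #|F|), n qudits labelled by 'I_n.
   Amplitudes live in an arbitrary numeric algebraically closed field C
   (e.g. the complex numbers), w is a primitive p-th root of unity
   (p = char F), playing the role of e^{2 pi i / p}. *)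
Section Qudits.
Variables (F : finFieldType) (C : numClosedFieldType) (p : nat) (w : C) (n : nat).

Notation cfgF := {ffun 'I_n -> F}.

Definition supp_in (B : {set 'I_n}) (x : cfgF) : bool :=
  [forall j, (j \notin B) ==> (x j == 0)].

(* basis of the Hilbert space of the qudits in B: configurations on B
   (encoded as elements of F^n vanishing outside B) *)
Notation cfg B := {x : cfgF | supp_in B x}.

Definition trunc (B : {set 'I_n}) (f : cfgF) : cfgF :=
  [ffun j => if j \in B then f j else 0].

Lemma trunc_supp B f : supp_in B (trunc B f).
Proof. by apply/forallP => j; apply/implyP => h; rewrite ffunE (negbTE h). Qed.

Definition mk (B : {set 'I_n}) (f : cfgF) : cfg B := exist _ (trunc B f) (trunc_supp B f).

Definition glue (B : {set 'I_n}) (y z : cfgF) : cfgF :=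
  [ffun j => if j \in B then y j else z j].

Definition op (B : {set 'I_n}) := cfg B -> cfg B -> C.
Definition vec (B : {set 'I_n}) := cfg B -> C.

Definition mulop B (M N : op B) : op B := fun x y => \sum_(z : cfg B) M x z * N z y.
Definition applyop B (M : op B) (v : vec B) : vec B := fun x => \sum_(z : cfg B) M x z * v z.

Definition Emat B (y y' : cfg B) : op B := fun u v => ((u == y) && (v == y'))%:R.

Definition ptr (A B : {set 'I_n}) (rho : op A) : op B :=
  fun x x' => \sum_(z : cfg (~: B))
    rho (mk A (glue B (val x) (val z))) (mk A (glue B (val x') (val z))).

(* (Phi \otimes id_D)(rho) for Phi : op B1 -> op B2, rho on A = B1 u D,
   result on A' = B2 u D (D = A \ B1 = A' \ B2), defined on matrix units *)
Definition ext_id (B1 B2 A A' : {set 'I_n}) (Phi : op B1 -> op B2) (rho : op A) : op A' :=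
  fun x x' => \sum_(y : cfg B1) \sum_(y' : cfg B1)
    Phi (Emat y y') (mk B2 (val x)) (mk B2 (val x')) *
    rho (mk A (glue B1 (val y) (val x))) (mk A (glue B1 (val y') (val x'))).



Arguments ext_id : clear implicits.
Arguments ptr : clear implicits.

Definition channel (B1 B2 : {set 'I_n}) (Phi : op B1 -> op B2) : Prop :=
  exists K : seq (cfg B2 -> cfg B1 -> C),
    (forall rho x x', Phi rho x x' =
       \sum_(k <- K) \sum_(u : cfg B1) \sum_(v : cfg B1) k x u * rho u v * (k x' v)^*)
    /\ (forall u v : cfg B1,
       \sum_(k <- K) \sum_(x : cfg B2) (k x u)^* * k x v = (u == v)%:R).

(* field trace tr_{F/F_p}, and its value as an integer in [0, p) *)
Definition trF (x : F) : F := \sum_(k < logn p #|F|) x ^+ (p ^ k).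
Definition trnat (x : F) : nat := odflt 0%N (omap val [pick k : 'I_p | (k%:R : F) == trF x]).

(* Pauli operator X^alpha Z^beta on all n qudits:
   X^a Z^b |x> = w^{tr(b x)} |x + a> (tensor product over qudits) *)
Definition pauli (P : cfgF * cfgF) : op setT :=
  fun y x => if val y == [ffun j => val x j + P.1 j]
             then \prod_(j < n) w ^+ trnat (P.2 j * val x j) else 0.

Definition psupp (P : cfgF * cfgF) : {set 'I_n} :=
  [set j | (P.1 j != 0) || (P.2 j != 0)].

Definition stabilizer_group (S : {set cfgF * cfgF}) : Prop :=
  [/\ ([ffun => 0], [ffun => 0]) \in S,
      (forall P Q, P \in S -> Q \in S ->
         ([ffun j => P.1 j + Q.1 j], [ffun j => P.2 j + Q.2 j]) \in S),
      (forall (c : F) P, P \in S -> ([ffun j => c * P.1 j], [ffun j => c * P.2 j]) \in S)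
    & (forall P Q, P \in S -> Q \in S -> mulop (pauli P) (pauli Q) = mulop (pauli Q) (pauli P))].

Definition in_code (S : {set cfgF * cfgF}) (v : vec setT) : Prop :=
  forall P, P \in S -> applyop (pauli P) v = v.

Definition code_state (S : {set cfgF * cfgF}) (rho : op setT) : Prop :=
  [/\ (forall x y, rho y x = (rho x y)^*),
      (forall v : vec setT, 0 <= \sum_x \sum_y (v x)^* * rho x y * v y),
      \sum_x rho x x = 1
    & (forall u : vec setT, in_code S (applyop rho u))].

Definition locally_recoverable (S : {set cfgF * cfgF}) (r : nat) : Prop :=
  forall i : 'I_n, exists I : {set 'I_n},
    [/\ i \in I, (#|I| <= r)%N &
      exists Phi : op (I :\ i) -> op I, channel Phi /\
        forall rho, code_state S rho ->
          ext_id (I :\ i) I [set~ i] setT Phi (ptr setT [set~ i] rho) = rho].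

End Qudits.

From HB Require Import structures.
From mathcomp Require Import all_boot all_order all_algebra all_field.
From mathcomp Require Import ring.
From Stdlib Require Import FunctionalExtensionality.
Import GRing.Theory Num.Theory.
Local Open Scope ring_scope.
Set Implicit Arguments. Unset Strict Implicit. Unset Printing Implicit Defensive.

(* Fix the erased qudit i and the stabilizers P, Q of the hypothesis; all the
   combinations M = cP + dQ lie in S, are supported on I = supp P u supp Q and
   act on qudit i as X^c Z^d.  The recovery channel has Kraus operators
   K_e = sqrt q Pi (|e>_i (x) id), e in F: it reinserts qudit i in the state |e>
   and applies Pi = q^-2 sum_{c,d} (cP + dQ) on the qudits of I.
   A code state rho is fixed by every M, so each column Y |-> rho(Y, Z) obeys
   rho(Y, Z) = phase_M(Y - M_X) rho(Y - M_X, Z).  Using this with M = cP + dQ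
   where c shifts the reinserted value e onto the erased value t, the sum over
   d becomes the character sum sum_d chi(d (e - t)) = q [e = t]: only the
   correct reinsertion survives and the channel returns rho.  The same
   character sum gives sum_e K_e^* K_e = 1, i.e. trace preservation. *)

Lemma sum_delta (R : pzSemiRingType) (T : finType) (t0 : T) (f : T -> R) :
  \sum_t (t == t0)%:R * f t = f t0.
Proof.
rewrite (bigD1 t0) //= eqxx mul1r big1 ?addr0 // => t /negbTE->.
by rewrite mul0r.
Qed.

Lemma sum_pair_delta (R : pzSemiRingType) (T1 T2 : finType) (c : T1) (h : T1 * T2 -> R) :
  \sum_(m : T1 * T2) (m.1 == c)%:R * h m = \sum_d h (c, d).
Proof.
rewrite (eq_bigr (fun m => (m.1 == c)%:R * h (m.1, m.2))); last by case.
rewrite -(pair_bigA _ (fun a b => (a == c)%:R * h (a, b))) /=.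
by under eq_bigr do rewrite -mulr_sumr; rewrite sum_delta.
Qed.

Lemma exchange_big2 (R : nmodType) (T1 T2 T3 T4 : finType) (f : T1 -> T2 -> T3 -> T4 -> R) :
  \sum_a \sum_b \sum_c \sum_d f a b c d = \sum_c \sum_d \sum_a \sum_b f a b c d.
Proof.
under eq_bigr do (rewrite exchange_big; under eq_bigr do rewrite exchange_big).
by rewrite exchange_big; under eq_bigr do rewrite exchange_big.
Qed.

Section AdditiveCharacter.
Variables (F : finFieldType) (C : numClosedFieldType) (p : nat) (w : C).
Hypotheses (pcharFp : p \in [pchar F]) (wp : p.-primitive_root w).

Let p_gt1 : (1 < p)%N. Proof. exact/prime_gt1/(pcharf_prime pcharFp). Qed.

Let cardF : #|F| = (p ^ logn p #|F|)%N.
Proof. exact: card_pprimeChar pcharFp. Qed.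

Lemma natrF_eq a b : ((a%:R : F) == b%:R) = (a == b %[mod p]).
Proof.
wlog ab : a b / (a <= b)%N.
  by move=> H; case: (leqP a b) => [/H //|/ltnW /H]; rewrite eq_sym [RHS]eq_sym.
by rewrite [RHS]eq_sym eqn_mod_dvd // (dvdn_pcharf pcharFp) natrB // subr_eq0 eq_sym.
Qed.

Lemma exprD_pchar_pow k (x y : F) : (x + y) ^+ (p ^ k) = x ^+ (p ^ k) + y ^+ (p ^ k).
Proof.
apply: exprDn_pchar; rewrite (eq_pnat _ (pcharf_eq pcharFp)).
by rewrite pnatX pnat_id ?(pcharf_prime pcharFp).
Qed.

Lemma trFD (x y : F) : trF p (x + y) = trF p x + trF p y.
Proof. by rewrite /trF -big_split; apply: eq_bigr => k _; rewrite exprD_pchar_pow. Qed.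

Lemma trF_frobenius (x : F) : trF p x ^+ p = trF p x.
Proof.
rewrite /trF -(pFrobenius_autE pcharFp) rmorph_sum /=.
under eq_bigr do rewrite pFrobenius_autE -exprM -expnSr.
set m := logn p #|F|.
have recl : \sum_(k < m.+1) x ^+ (p ^ k) = x + \sum_(k < m) x ^+ (p ^ k.+1).
  by rewrite big_ord_recl expn0 expr1.
have recr : \sum_(k < m.+1) x ^+ (p ^ k) = \sum_(k < m) x ^+ (p ^ k) + x.
  by rewrite big_ord_recr /= -cardF expf_card.
by apply: (@addrI _ x); rewrite -recl recr addrC.
Qed.

Lemma frobenius_fixed_natr (y : F) : y ^+ p = y -> exists2 k, (k < p)%N & k%:R = y.
Proof.
move=> yp; pose primes := [seq (k%:R : F) | k <- iota 0 p].
have [/mapP[k] | y_new] := boolP (y \in primes).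
  by rewrite mem_iota => /andP[_ kp] ->; exists k.
pose pol : {poly F} := 'X^p - 'X.
have size_pol : size pol = p.+1.
  by rewrite size_polyDl ?size_polyXn // size_polyN size_polyX ltnS.
have pol_neq0 : pol != 0 by rewrite -size_poly_eq0 size_pol.
have roots : all (root pol) (y :: primes).
  rewrite /= /root !hornerE yp subrr eqxx /=; apply/allP => _ /mapP[k _ ->].
  by rewrite /root !hornerE -(pFrobenius_autE pcharFp) pFrobenius_aut_nat subrr.
have uniq_roots : uniq (y :: primes).
  rewrite /= y_new map_inj_in_uniq ?iota_uniq // => a b.
  rewrite !mem_iota => /andP[_ ap] /andP[_ bp] /eqP.
  by rewrite natrF_eq !modn_small // => /eqP.
have := max_poly_roots pol_neq0 roots uniq_roots.
by rewrite /= size_map size_iota size_pol ltnn.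
Qed.

Lemma trnatP (x : F) : (trnat p x < p)%N /\ (trnat p x)%:R = trF p x.
Proof.
rewrite /trnat; case: pickP => [k /eqP -> | none] //=.
have [k kp k_tr] := frobenius_fixed_natr (trF_frobenius x).
by have := none (Ordinal kp); rewrite /= k_tr eqxx.
Qed.

Lemma trF_neq0 : exists t : F, trF p t != 0.
Proof.
apply/existsP; apply: contraT => /existsPn trF_eq0.
set m := logn p #|F|.
have m_gt0 : (0 < m)%N by rewrite -(ltn_exp2l 0 _ p_gt1) -cardF finNzRing_gt1.
pose T : {poly F} := \sum_(k < m) 'X^(p ^ k).
have T_lead : T`_(p ^ m.-1) = 1.
  rewrite coef_sum (bigD1 (Ordinal (etrans (ltn_predL m) m_gt0))) //= coefXn eqxx big1 ?addr0 //.
  by move=> k; rewrite -val_eqE coefXn eqn_exp2l // eq_sym => /negbTE ->.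
have T_neq0 : T != 0 by apply: contra_eq_neq T_lead => ->; rewrite coef0 eq_sym oner_neq0.
have T_size : (size T <= (p ^ m.-1).+1)%N.
  apply: leq_trans (size_sum _ _ _) _; apply/bigmax_leqP => k _.
  by rewrite size_polyXn ltnS leq_exp2l // -ltnS prednK.
have T_roots : all (root T) (enum F).
  apply/allP => t _; apply/eqP; rewrite horner_sum -[RHS](eqP (negPn (trF_eq0 t))).
  by apply: eq_bigr => k _; rewrite hornerXn.
have := leq_trans (max_poly_roots T_neq0 T_roots (enum_uniq F)) T_size.
by rewrite -cardE cardF ltnS leq_exp2l // -ltnS prednK // ltnn.
Qed.

Definition chi (a : F) : C := w ^+ trnat p a.

Lemma chi_trF (a : F) k : (k%:R : F) = trF p a -> chi a = w ^+ k.
Proof.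
move=> k_tr; apply/eqP; rewrite /chi (eq_prim_root_expr wp) -natrF_eq.
by case: (trnatP a) => _ ->; rewrite k_tr.
Qed.

Lemma chiD a b : chi (a + b) = chi a * chi b.
Proof.
rewrite /chi -exprD; apply: chi_trF.
by rewrite natrD trFD; case: (trnatP a) => _ ->; case: (trnatP b) => _ ->.
Qed.

Lemma chi0 : chi 0 = 1.
Proof.
rewrite (@chi_trF 0 0) // /trF big1 // => k _.
by rewrite expr0n expn_eq0 (gtn_eqF (ltnW p_gt1)).
Qed.

Lemma norm_chi a : `|chi a| = 1.
Proof.
have /eqP norm_w : `|w| == 1.
  by rewrite -(@pexpr_eq1 _ _ p) ?(ltnW p_gt1) // -normrX (prim_expr_order wp) normr1.
by rewrite normrX norm_w expr1n.
Qed.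

Lemma chi_conjK a : (chi a)^* * chi a = 1.
Proof. by rewrite -normCKC norm_chi expr1n. Qed.

Lemma conj_chi a : (chi a)^* = chi (- a).
Proof.
apply: (@mulIf _ (chi a)); last by rewrite chi_conjK -chiD addNr chi0.
by rewrite -normr_eq0 norm_chi oner_neq0.
Qed.

Lemma sum_chi (a : F) : \sum_(d : F) chi (d * a) = (a == 0)%:R * #|F|%:R.
Proof.
have [-> | a_neq0] := eqVneq a 0.
  by under eq_bigr do rewrite mulr0 chi0; rewrite sumr_const mul1r.
have [t tr_t] := trF_neq0; pose d0 := t / a.
have chi_d0 : chi (d0 * a) != 1.
  rewrite /d0 divfK // /chi -(expr0 w) (eq_prim_root_expr wp) mod0n.
  case: (trnatP t) => tp tr_nat; rewrite modn_small //.
  by apply: contra tr_t => /eqP tr0; rewrite -tr_nat tr0.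
have shift : \sum_(d : F) chi (d * a) = (\sum_(d : F) chi (d * a)) * chi (d0 * a).
  rewrite mulr_suml (reindex_inj (addIr d0)) /=.
  by apply: eq_bigr => d _; rewrite mulrDl chiD.
have /eqP : (\sum_(d : F) chi (d * a)) * (1 - chi (d0 * a)) = 0.
  by rewrite mulrBr mulr1 -shift subrr.
by rewrite mulf_eq0 subr_eq0 [1 == _]eq_sym (negbTE chi_d0) orbF mul0r => /eqP.
Qed.

End AdditiveCharacter.

Section Configurations.
Variables (F : finFieldType) (C : numClosedFieldType) (p : nat) (w : C) (n : nat).
Hypotheses (pcharFp : p \in [pchar F]) (wp : p.-primitive_root w).
Local Notation cfgF := {ffun 'I_n -> F}.
Local Notation cfg B := {x : cfgF | supp_in B x}.
Local Notation chi := (chi p w).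

Definition upd (x : cfgF) (i : 'I_n) (t : F) : cfgF := [ffun j => if j == i then t else x j].

Lemma upd_id (x : cfgF) i : upd x i (x i) = x.
Proof. by apply/ffunP => j; rewrite ffunE; case: eqP => [->|]. Qed.

Definition phase (M : cfgF * cfgF) (x : cfgF) : C := \prod_j chi (M.2 j * x j).

Lemma supp_inP (B : {set 'I_n}) (x : cfgF) :
  reflect (forall j, j \notin B -> x j = 0) (supp_in B x).
Proof.
apply: (iffP forallP) => [x_out j jB | x_out j]; last by apply/implyP => /x_out ->.
exact/eqP/(implyP (x_out j)).
Qed.

Lemma sum_cfg_dot (B : {set 'I_n}) (T : finType) (X Y : T -> cfgF) (al be : T -> C) :
  (forall t, supp_in B (X t)) ->
  \sum_(a : cfg B) (\sum_t (val a == X t)%:R * al t)^* * (\sum_s (val a == Y s)%:R * be s)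
  = \sum_t \sum_s (X t == Y s)%:R * ((al t)^* * be s).
Proof.
move=> suppX; under eq_bigr do rewrite rmorph_sum big_distrlr /=.
rewrite exchange_big; apply: eq_bigr => t _; rewrite exchange_big; apply: eq_bigr => s _.
pose a_t : cfg B := exist _ (X t) (suppX t).
rewrite -[RHS](sum_delta a_t (fun a => (val a == Y s)%:R * ((al t)^* * be s))).
apply: eq_bigr => a _; rewrite rmorphM rmorph_nat (_ : (val a == X t) = (a == a_t)) //.
by rewrite -mulrA; congr (_ * _); rewrite mulrCA.
Qed.

Lemma pauliE M (y x : cfg setT) :
  pauli p w M y x = if val y == val x + M.1 then phase M (val x) else 0.
Proof.
by rewrite /pauli (_ : [ffun j => _] = val x + M.1) //; apply/ffunP => j; rewrite !ffunE.
Qed.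

Lemma phase_upd M x i e : phase M (upd x i e) = chi (M.2 i * (e - x i)) * phase M x.
Proof.
rewrite /phase /upd (bigD1 i) // [in RHS](bigD1 i) //= mulrA -chiD // ffunE eqxx -mulrDr subrK.
by congr (_ * _); apply: eq_bigr => j /negbTE ji; rewrite ffunE ji.
Qed.

Lemma phase_conjK M x : (phase M x)^* * phase M x = 1.
Proof. by rewrite rmorph_prod -big_split big1 // => j _; apply: chi_conjK. Qed.

Lemma eq_phase (B : {set 'I_n}) (M : cfgF * cfgF) (x y : cfgF) :
  (forall j, j \notin B -> M.2 j = 0) -> {in B, x =1 y} -> phase M x = phase M y.
Proof.
move=> M2_out xy; apply: eq_bigr => j _.
by have [/xy -> // | /M2_out ->] := boolP (j \in B); rewrite !mul0r.
Qed.

Definition entry (rho : op F C [set: 'I_n]) (X Y : cfgF) : C := rho (mk setT X) (mk setT Y).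

Lemma mkT (x : cfg setT) : mk setT (val x) = x.
Proof. by apply: val_inj; apply/ffunP => j; rewrite ffunE in_setT. Qed.

Lemma valmkT (X : cfgF) : val (mk setT X) = X.
Proof. by apply/ffunP => j; rewrite ffunE in_setT. Qed.

Lemma glue_erase i (A z : cfgF) : glue [set~ i] (trunc [set~ i] A) z = upd A i (z i).
Proof. by apply/ffunP => j; rewrite !ffunE !inE; case: eqVneq => [->|]. Qed.

Lemma ptr_erase (rho : op F C [set: 'I_n]) (i : 'I_n) (A A' : cfgF) :
  @ptr F C n setT [set~ i] rho (mk [set~ i] A) (mk [set~ i] A')
  = \sum_t entry rho (upd A i t) (upd A' i t).
Proof.
pose at_i t : cfg (~: [set~ i]) := mk (~: [set~ i]) [ffun j => t].
rewrite /ptr (reindex at_i) /=; last first.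
  exists (fun z : cfg (~: [set~ i]) => val z i) => [t _ | z _]; first by rewrite !ffunE !inE eqxx.
  apply: val_inj; apply/ffunP => j; rewrite !ffunE !inE.
  have [-> // | ji] := eqVneq j i.
  by have /supp_inP z_out := valP z; rewrite /= z_out // !inE negbK.
by apply: eq_bigr => t _; rewrite !glue_erase !ffunE !inE eqxx.
Qed.

Section CodeStates.
Variables (S : {set cfgF * cfgF}) (rho : op F C [set: 'I_n]).
Hypothesis rho_code : code_state p w S rho.

Lemma code_state_adj X Y : entry rho Y X = (entry rho X Y)^*.
Proof. by case: rho_code => herm _ _ _; apply: herm. Qed.

Lemma code_state_shift M X Y :
  M \in S -> entry rho Y X = phase M (Y - M.1) * entry rho (Y - M.1) X.
Proof.
case: rho_code => _ _ _ /(_ (fun z => (z == mk setT X)%:R)) in_code MS.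
have /(congr1 (fun v => v (mk setT Y))) := in_code M MS; rewrite /applyop /entry.
under eq_bigr do under eq_bigr do rewrite mulrC.
under eq_bigr do rewrite sum_delta.
under [RHS]eq_bigr do rewrite mulrC.
rewrite sum_delta => <-.
rewrite (bigD1 (mk setT (Y - M.1))) //= big1 ?addr0 => [|z z_neq].
  by rewrite pauliE !valmkT subrK eqxx.
rewrite pauliE valmkT; case: eqP => [YM | _]; last by rewrite mul0r.
by case/eqP: z_neq; apply: val_inj; rewrite valmkT YM addrK.
Qed.

End CodeStates.
End Configurations.

Section LocalRecovery.
Variables (F : finFieldType) (C : numClosedFieldType) (p : nat) (w : C) (n : nat).
Hypotheses (pcharFp : p \in [pchar F]) (wp : p.-primitive_root w).
Local Notation cfgF := {ffun 'I_n -> F}.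
Local Notation cfg B := {x : cfgF | supp_in B x}.
Local Notation chi := (chi p w).
Local Notation q := (#|F|%:R : C).
Local Notation phase := (phase p w).

Variables (i : 'I_n) (P Q : cfgF * cfgF).
Hypotheses (P1i : P.1 i = 1) (P2i : P.2 i = 0) (Q1i : Q.1 i = 0) (Q2i : Q.2 i = 1).
Local Notation I := (psupp P :|: psupp Q).

Definition comb (m : F * F) : cfgF * cfgF :=
  ([ffun j => m.1 * P.1 j + m.2 * Q.1 j], [ffun j => m.1 * P.2 j + m.2 * Q.2 j]).

Lemma q_neq0 : q != 0.
Proof. by rewrite pnatr_eq0 -lt0n; apply/card_gt0P; exists 0. Qed.

Lemma i_in_I : i \in I.
Proof. by rewrite !inE P1i oner_eq0. Qed.

Lemma comb2i m : (comb m).2 i = m.2.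
Proof. by rewrite ffunE P2i Q2i mulr1 mulr0 add0r. Qed.

Lemma notin_I j : j \notin I -> [/\ P.1 j = 0, P.2 j = 0, Q.1 j = 0 & Q.2 j = 0].
Proof. by rewrite !inE !negb_or !negbK => /andP[/andP[/eqP-> /eqP->] /andP[/eqP-> /eqP->]]. Qed.

Lemma cfg_i (u : cfg (I :\ i)) : val u i = 0.
Proof. by have /supp_inP -> := valP u; rewrite ?in_setD1 ?eqxx. Qed.

(* The entry <a| Pi (|e>_i (x) |u>) with Pi = q^-2 sum_m pauli (comb m) on the
   qudits of I: the configuration upd (val u) i e is |e>_i (x) |u>. *)
Definition kraus (e : F) (a : cfg I) (u : cfg (I :\ i)) : C :=
  q^-2 * \sum_m (val a == upd (val u) i e + (comb m).1)%:R * phase (comb m) (upd (val u) i e).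

Lemma supp_kraus_target e (u : cfg (I :\ i)) m : supp_in I (upd (val u) i e + (comb m).1).
Proof.
apply/supp_inP => j jI; have ji : j != i by apply: contraNneq jI => ->; apply: i_in_I.
have /supp_inP u_j := valP u; have [P1j _ Q1j _] := notin_I jI.
rewrite !ffunE (negbTE ji) u_j ?in_setD1 ?(negbTE jI) ?andbF //.
by rewrite P1j Q1j !mulr0 !addr0.
Qed.

Lemma eq_upd_add (x y A B : cfgF) e :
  x i = y i -> (upd x i e + A == upd y i e + B) = (x + A == y + B).
Proof.
move=> xy; apply/eqP/eqP => /ffunP eq_j; apply/ffunP => j; have := eq_j j;
  rewrite !ffunE; case: eqP => [-> | //]; first by rewrite xy => /addrI ->.
by rewrite xy => /addrI ->.
Qed.

Lemma comb_overlap m m' (u v : cfg (I :\ i)) :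
  m.2 = m'.2 -> (val u + (comb m).1 == val v + (comb m').1) = (m == m') && (u == v).
Proof.
case: m m' => c d [c' d'] dd'; have {dd'} <- : d = d' := dd'.
apply/eqP/andP => [/ffunP uv | [/eqP<- /eqP->] //].
have cc' : c = c'.
  by have := uv i; rewrite !ffunE !cfg_i P1i Q1i !mulr1 !mulr0 !addr0 !add0r.
subst c'; split => //; apply/eqP/val_inj/ffunP => j.
by have := uv j; rewrite !ffunE => /addIr.
Qed.

Lemma sum_kraus_overlap m m' (u v : cfg (I :\ i)) :
  \sum_e (upd (val u) i e + (comb m).1 == upd (val v) i e + (comb m').1)%:R *
     ((phase (comb m) (upd (val u) i e))^* * phase (comb m') (upd (val v) i e))
  = (m' == m)%:R * ((u == v)%:R * q).
Proof.
have chi_e e : (chi (m.2 * (e - 0)))^* * chi (m'.2 * (e - 0)) = chi (e * (m'.2 - m.2)).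
  by rewrite conj_chi // -chiD //; congr chi; ring.
under eq_bigr do rewrite eq_upd_add ?cfg_i // !phase_upd // !comb2i !cfg_i rmorphM
  mulrACA chi_e [_%:R * _]mulrCA.
rewrite -mulr_suml sum_chi // subr_eq0.
have [m2 | m2_neq] := eqVneq m'.2 m.2; last first.
  by have [mm | _] := eqVneq m' m; [rewrite mm eqxx in m2_neq | rewrite !mul0r].
rewrite mul1r comb_overlap; last by rewrite m2.
rewrite [m == m']eq_sym; have [<- | _] := eqVneq m' m; last by rewrite andFb !mul0r mulr0.
have [<- | _] := eqVneq u v; last by rewrite andbF !mul0r !mulr0.
by rewrite phase_conjK // /= !mul1r mulr1.
Qed.

Lemma kraus_gram (u v : cfg (I :\ i)) :
  \sum_e \sum_(a : cfg I) (kraus e a u)^* * kraus e a v = (u == v)%:R / q.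
Proof.
rewrite /kraus.
under eq_bigr do under eq_bigr do rewrite rmorphM fmorphV rmorphXn rmorph_nat mulrACA.
under eq_bigr => e _ do rewrite -mulr_sumr (sum_cfg_dot _ _ _ (supp_kraus_target e u)).
rewrite -mulr_sumr exchange_big; under eq_bigr do rewrite exchange_big.
under eq_bigr do under eq_bigr do rewrite sum_kraus_overlap.
under eq_bigr do rewrite sum_delta.
rewrite sumr_const card_prod -[_ *+ (_ * _)]mulr_natr natrM.
by field; apply: q_neq0.
Qed.

Lemma comb_in_stabilizer S : stabilizer_group p w S -> P \in S -> Q \in S ->
  forall m, comb m \in S.
Proof.
case=> _ S_add S_scale _ PS QS m.
apply: etrans (S_add _ _ (S_scale m.1 _ PS) (S_scale m.2 _ QS)).
by congr (_ \in S); congr pair; apply/ffunP => j; rewrite !ffunE.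
Qed.

Definition shift_invariant (g : cfgF -> C) : Prop :=
  forall m X, g X = phase (comb m) (X - (comb m).1) * g (X - (comb m).1).

Lemma sum_shift_phase g (x : cfgF) e t : shift_invariant g ->
  \sum_d phase (comb (x i - e, d)) (x - (comb (x i - e, d)).1) *
          g (upd (x - (comb (x i - e, d)).1) i t)
  = (e == t)%:R * q * g x.
Proof.
(* The shift by comb (c, d) brings qudit i of x to e and that of x' to t, so
   the two shifted configurations differ only there, by a phase chi (d (e - t)). *)
move=> g_inv; set c := x i - e; pose x' := upd x i (x i + t - e).
have term d : phase (comb (c, d)) (x - (comb (c, d)).1) * g (upd (x - (comb (c, d)).1) i t)
              = chi (d * (e - t)) * g x'.
  have shifted : upd (x - (comb (c, d)).1) i t = x' - (comb (c, d)).1.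
    apply/ffunP => j; rewrite !ffunE; case: eqP => [-> | //].
    by rewrite P1i Q1i /= /c; ring.
  have back : x - (comb (c, d)).1 = upd (x' - (comb (c, d)).1) i e.
    apply/ffunP => j; rewrite !ffunE; case: eqP => [-> | //].
    by rewrite P1i Q1i /= /c; ring.
  rewrite shifted [in RHS](g_inv (c, d)) mulrA; congr (_ * _).
  rewrite {1}back phase_upd // comb2i; congr (chi _ * _).
  by rewrite !ffunE eqxx P1i Q1i /= /c; ring.
rewrite (eq_bigr _ (fun d _ => term d)) -mulr_suml sum_chi // subr_eq0.
have [et | _] := eqVneq e t; last by rewrite !mul0r.
by rewrite /x' -et addrK upd_id mul1r.
Qed.

Lemma kraus_target_eq (x : cfgF) e m (y : cfg (I :\ i)) :
  (val (mk I x) == upd (val y) i e + (comb m).1)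
  = (m.1 == x i - e) && (y == mk (I :\ i) (x - (comb m).1)).
Proof.
have /supp_inP y_out := valP y.
apply/eqP/andP => [/ffunP xy | [/eqP m1 /eqP ->]].
  have xy_i := xy i; rewrite !ffunE eqxx i_in_I P1i Q1i in xy_i.
  split; first by apply/eqP; rewrite xy_i; ring.
  apply/eqP/val_inj/ffunP => j; rewrite /= ffunE.
  have [jIi | /y_out //] := boolP (j \in I :\ i).
  move: jIi (xy j); rewrite in_setD1 => /andP[ji jI].
  by rewrite !ffunE jI (negbTE ji) => ->; rewrite addrK.
apply/ffunP => j; rewrite !ffunE; have [-> | ji] := eqVneq j i.
  by rewrite i_in_I P1i Q1i m1; ring.
rewrite in_setD1 ji /=; have [jI | jI] := boolP (j \in I); first by rewrite subrK.
by have [P1j _ Q1j _] := notin_I jI; rewrite P1j Q1j !mulr0 !addr0.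
Qed.

Lemma kraus_apply g (x : cfgF) e t : shift_invariant g ->
  \sum_(y : cfg (I :\ i)) kraus e (mk I x) y * g (upd (glue (I :\ i) (val y) x) i t)
  = (e == t)%:R / q * g x.
Proof.
move=> g_inv; rewrite /kraus.
under eq_bigr do rewrite -mulrA mulr_suml.
rewrite -mulr_sumr exchange_big /=.
transitivity (q^-2 * \sum_(m : F * F) (m.1 == x i - e)%:R *
  (phase (comb m) (x - (comb m).1) * g (upd (x - (comb m).1) i t))).
  congr (_ * _); apply: eq_bigr => m _; set y0 := mk (I :\ i) (x - (comb m).1).
  under eq_bigr do rewrite kraus_target_eq -mulrA.
  have [m1 | _] := eqVneq m.1 (x i - e); last by rewrite mul0r big1 // => y _; rewrite mul0r.
  rewrite mul1r sum_delta; congr (_ * g _).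
    apply: (@eq_phase _ _ _ _ _ I) => [j /notin_I[_ P2j _ Q2j] | j jI].
      by rewrite ffunE P2j Q2j !mulr0 addr0.
    rewrite !ffunE; have [-> | ji] := eqVneq j i; first by rewrite P1i Q1i m1 /=; ring.
    by rewrite in_setD1 ji jI.
  apply/ffunP => j; rewrite !ffunE; case: eqP => // /eqP ji.
  rewrite in_setD1 ji /=; case: (boolP (j \in I)) => // /notin_I[-> _ -> _].
  by rewrite !mulr0 addr0 subr0.
rewrite sum_pair_delta sum_shift_phase //.
by field; apply: q_neq0.
Qed.

Definition recovery_kraus : seq (cfg I -> cfg (I :\ i) -> C) :=
  [seq (fun a u => sqrtC q * kraus e a u) | e <- enum F].

Definition recovery (tau : op F C (I :\ i)) : op F C I :=
  fun a a' => \sum_(k <- recovery_kraus) \sum_u \sum_v k a u * tau u v * (k a' v)^*.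

Lemma sqrtq_conjK : (sqrtC q)^* * sqrtC q = q.
Proof. by rewrite -normCKC ger0_norm ?sqrtC_ge0 ?ler0n // sqrtCK. Qed.

Lemma recovery_channel : channel recovery.
Proof.
exists recovery_kraus; split => // u v; rewrite big_map big_enum /=.
under eq_bigr do under eq_bigr do rewrite rmorphM mulrACA sqrtq_conjK.
under eq_bigr do rewrite -mulr_sumr.
by rewrite -mulr_sumr kraus_gram; field; apply: q_neq0.
Qed.

Lemma recovery_unit (y y' : cfg (I :\ i)) a a' :
  recovery (Emat C y y') a a' = q * \sum_e kraus e a y * (kraus e a' y')^*.
Proof.
rewrite /recovery big_map big_enum mulr_sumr; apply: eq_bigr => e _.
rewrite (bigD1 y) //= [X in _ + X]big1 ?addr0; last first.
  by move=> u /negbTE uy; apply: big1 => v _; rewrite /Emat uy mulr0 mul0r.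
rewrite (bigD1 y') //= big1 ?addr0; last first.
  by move=> v /negbTE vy; rewrite /Emat vy andbF mulr0 mul0r.
by rewrite /Emat !eqxx mulr1 rmorphM mulrACA [sqrtC _ * _]mulrC sqrtq_conjK.
Qed.

Section CodeStateRecovery.
Variable S : {set cfgF * cfgF}.
Hypothesis comb_in_S : forall m, comb m \in S.
Variable rho : op F C [set: 'I_n].
Hypothesis rho_code : code_state p w S rho.

Local Notation erased X y t := (upd (glue (I :\ i) (val y) X) i t).

Lemma entry_shift_invariant Z : shift_invariant (entry rho ^~ Z).
Proof. by move=> m X; apply: (code_state_shift rho_code _ _ (comb_in_S m)). Qed.

Lemma recovery_entry (X X' : cfgF) e t :
  \sum_y \sum_y' kraus e (mk I X) y * (kraus e (mk I X') y')^* *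
                  entry rho (erased X y t) (erased X' y' t)
  = ((e == t)%:R / q) ^+ 2 * entry rho X X'.
Proof.
transitivity (\sum_y kraus e (mk I X) y * ((e == t)%:R / q * entry rho (erased X y t) X')).
  apply: eq_bigr => y _; under eq_bigr do rewrite -mulrA; rewrite -mulr_sumr; congr (_ * _).
  transitivity ((\sum_y' kraus e (mk I X') y' * entry rho (erased X' y' t) (erased X y t))^*).
    rewrite rmorph_sum; apply: eq_bigr => y' _.
    by rewrite rmorphM [in LHS](code_state_adj rho_code).
  rewrite (kraus_apply _ _ _ (entry_shift_invariant _)) !rmorphM fmorphV !rmorph_nat.
  by rewrite [in RHS](code_state_adj rho_code).
under eq_bigr do rewrite mulrCA.
by rewrite -mulr_sumr (kraus_apply _ _ _ (entry_shift_invariant _)) mulrA -expr2.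
Qed.

Lemma recovery_correct :
  @ext_id F C n (I :\ i) I [set~ i] setT recovery (@ptr F C n setT [set~ i] rho) = rho.
Proof.
apply: functional_extensionality => x; apply: functional_extensionality => x'.
rewrite /ext_id.
under eq_bigr do under eq_bigr do rewrite recovery_unit ptr_erase -mulrA big_distrlr /=.
under eq_bigr do rewrite -mulr_sumr.
rewrite -mulr_sumr exchange_big2.
under eq_bigr do under eq_bigr do rewrite recovery_entry.
have delta_sq (b : bool) : (b%:R / q) ^+ 2 = b%:R * q^-2.
  by case: b; rewrite ?mul1r ?mul0r ?exprVn // expr0n.
under eq_bigr do under eq_bigr do rewrite delta_sq eq_sym -mulrA.
under eq_bigr do rewrite sum_delta.
rewrite sumr_const -mulr_natl /entry !mkT.
by field; apply: q_neq0.
Qed.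

End CodeStateRecovery.

End LocalRecovery.

Unset Implicit Arguments.

Theorem proposition2p19 (F : finFieldType) (C : numClosedFieldType) (p : nat) (w : C)
    (n r : nat) (S : {set {ffun 'I_n -> F} * {ffun 'I_n -> F}}) :
  p \in [pchar F] ->
  p.-primitive_root w ->
  stabilizer_group p w S ->
  (forall i : 'I_n, exists P Q, [/\ P \in S, Q \in S,
      (#|psupp P :|: psupp Q| <= r)%N,
      (P.1 i, P.2 i) = (1, 0) & (Q.1 i, Q.2 i) = (0, 1)]) ->
  locally_recoverable p w S r.
Proof.
move=> pcharFp wp S_stab local i.
have [P [Q [PS QS supp_r [P1i P2i] [Q1i Q2i]]]] := local i.
exists (psupp P :|: psupp Q); split => //; first exact: i_in_I.
exists (@recovery F C p w n i P Q); split; first exact: recovery_channel.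
move=> rho rho_code; apply: recovery_correct rho_code => //.
exact: comb_in_stabilizer S_stab PS QS.
Qed.
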